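(* Let $M_1,\dots,M_m$ generate the measured stabilizer group, let $\mathcal C^*$ be the set of nontrivial syndrome classes and, for each class $C$, let $J(C)\subseteq[m]$ be the set of indices of generators anticommuting with the errors of $C$. Suppose real numbers $(X_C)_{C\in\mathcal C^*}$ and $(Y_R)_{R\subseteq[m]}$ satisfy the linear system $$Y_R=\sum_{C\in\mathcal C^*}D_{R,C}X_C\quad\text{for all }R\in\mathcal R,\qquad D_{R,C}=\begin{cases}1&|R\cap J(C)|\text{ odd}\\0&|R\cap J(C)|\text{ even,}\end{cases}$$ where $\mathcal R=\bigcup_{C\in\mathcal C^*}\{R:R\subseteq J(C)\}$ (equivalently, the system $\log\vec\Lambda^{(\mathcal M')}=D'^{(\mathcal M')}\log\vec\nu$ with $X_C=\log\nu_C$, $Y_R=\log\Lambda(\prod_{i\in R}M_i)$, restricted to $\mathcal M'=\bigcup_{C}\{\prod_{i\in J'}M_i:J'\subseteq J(C)\}$). Then for every $C\in\mathcal C^*$, $$X_C=-\sum_{C'\in\mathcal C,\ J(C')\supsetneq J(C)}X_{C'}+\frac{1}{2^{|J(C)|-1}}\sum_{S\subseteq J(C)}(-1)^{|S|-1}Y_S,$$ so that this recursion solves the system.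
   Context: Setting: $n$-qubit Pauli operators without phases; a stabilizer code with measured subgroup $\mathcal M=\langle M_1,\dots,M_m\rangle$; a finite set $\mathcal E_\Gamma$ of local Pauli errors partitioned into syndrome classes according to which generators each error anticommutes with (errors in a class share the same set $J(C)$; distinct classes have distinct sets; the trivial class $C_0$ has $J(C_0)=\emptyset$, and $\mathcal C=\mathcal C^*\cup\{C_0\}$). The row of $D'$ for the stabilizer element $\prod_{i\in R}M_i$ and the column for class $C$ is the binary commutator of that element with any error of $C$, which equals $D_{R,C}$ above. In the application, $\nu_C$ is the learnable transformed eigenvalue of class $C$ and $\Lambda(M)$ the syndrome expectation value of $M$. *)

From HB Require Import structures.
From mathcomp Require Import all_boot all_order all_algebra.
From mathcomp Require Import reals.
Set Implicit Arguments. Unset Strict Implicit. Unset Printing Implicit Defensive.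
Import Order.TTheory GRing.Theory Num.Theory.
Local Open Scope ring_scope.

Definition Dentry (R : realType) (m : nat) (S J : {set 'I_m}) : R :=
  (odd #|S :&: J|)%:R.

(* Pairing each subset S of A with S ∆ {i}, for some i ∈ A ∩ B, shows that
   Σ_{S ⊆ A} (-1)^|S ∩ B| vanishes unless A ∩ B = ∅. Since D_{S,K} = (1 - (-1)^|S ∩ K|)/2
   and (-1)^(|S| + |S ∩ K|) = (-1)^|S \ K|, this gives
   Σ_{S ⊆ J(C)} (-1)^(|S|-1) D_{S,J(C')} = 2^(|J(C)|-1) [J(C) ⊆ J(C')].
   Hence the alternating sum of the Y_S over S ⊆ J(C) is 2^(|J(C)|-1) Σ_{J(C') ⊇ J(C)} X_{C'},
   and by injectivity of J the only term with J(C') = J(C) is X_C. *)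
From HB Require Import structures.
From mathcomp Require Import all_boot all_order all_algebra.
From mathcomp Require Import reals.
From mathcomp Require Import ring.
Set Implicit Arguments. Unset Strict Implicit. Unset Printing Implicit Defensive.
Import Order.TTheory GRing.Theory Num.Theory.
Local Open Scope ring_scope.

Section Toggle.
Variables (T : finType) (x : T).

Definition toggle (S : {set T}) := if x \in S then S :\ x else x |: S.

Lemma toggleK : involutive toggle.
Proof.
move=> S; rewrite /toggle; case xS: (x \in S).
  by rewrite setD11 setD1K.
by rewrite setU11 setU1K ?xS.
Qed.

Lemma toggle_subset (A S : {set T}) : x \in A -> (toggle S \subset A) = (S \subset A).
Proof.
move=> xA; rewrite /toggle; case: ifP => xS; last by rewrite subUset sub1set xA.
apply/idP/idP => [sSxA|]; last exact/subset_trans/subD1set.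
apply/subsetP => y yS; case: (eqVneq y x) => [-> //|neq_yx].
by apply: (subsetP sSxA); rewrite !inE neq_yx.
Qed.

Lemma sign_card_toggleI (R : pzRingType) (B S : {set T}) : x \in B ->
  (-1) ^+ #|toggle S :&: B| = - (-1) ^+ #|S :&: B| :> R.
Proof.
move=> xB; rewrite /toggle; case: ifP => xS.
  rewrite setIDAC (cardsD1 x (S :&: B)) inE xS xB.
  by rewrite exprS mulN1r opprK.
by rewrite setIUl (setIidPl _) ?sub1set // cardsU1 inE xS exprS mulN1r.
Qed.

End Toggle.

Lemma sum_subset_sign (R : numDomainType) (T : finType) (A B : {set T}) :
  \sum_(S : {set T} | S \subset A) (-1) ^+ #|S :&: B|
    = if A :&: B == set0 then 2%:R ^+ #|A| else 0 :> R.
Proof.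
case: ifP => [/eqP AB0 | /set0Pn [x /setIP [xA xB]]].
  rewrite (eq_bigr (fun _ => 1)) => [|S sSA]; last first.
    by rewrite (_ : S :&: B = set0) ?cards0 //; apply/eqP; rewrite -subset0 -AB0 setSI.
  rewrite sumr_const -natrX -card_powerset.
  by congr (_%:R); apply: eq_card => S; rewrite inE.
set s := LHS; suff /eqP: s *+ 2 = 0 by rewrite mulrn_eq0 => /eqP.
have s_opp : s = - s.
  rewrite {1}/s (reindex_inj (inv_inj (toggleK x))) /= -sumrN.
  by apply: eq_big => [S|S _]; rewrite ?toggle_subset ?sign_card_toggleI.
by rewrite mulr2n {1}s_opp addNr.
Qed.

Lemma natr_odd (R : numFieldType) (n : nat) : (odd n)%:R = (1 - (-1) ^+ n) / 2%:R :> R.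
Proof. by rewrite -signr_odd; case: odd => /=; rewrite ?expr0 ?expr1; field. Qed.

Lemma sign_cardI_mul (R : comPzRingType) (T : finType) (S K : {set T}) :
  (-1) ^+ #|S| * (-1) ^+ #|S :&: K| = (-1) ^+ #|S :&: ~: K| :> R.
Proof.
by rewrite -setDE -(cardsID K S) exprD mulrAC -expr2 -exprM mulnC exprM sqrrN !expr1n mul1r.
Qed.

Lemma sum_subset_sign_Dentry (R : realType) (m : nat) (T K : {set 'I_m}) : T != set0 ->
  \sum_(S : {set 'I_m} | S \subset T) - (-1) ^+ #|S| * Dentry R S K
    = if T \subset K then 2%:R ^+ #|T|.-1 else 0.
Proof.
move=> T_neq0.
have split_term (S : {set 'I_m}) : - (-1) ^+ #|S| * Dentry R S K
    = ((-1) ^+ #|S :&: ~: K| - (-1) ^+ #|S :&: setT|) / 2%:R.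
  by rewrite /Dentry natr_odd setIT -sign_cardI_mul; ring.
rewrite (eq_bigr _ (fun S _ => split_term S)) -mulr_suml sumrB !sum_subset_sign.
rewrite setIT (negPf T_neq0) subr0 -setDE setD_eq0.
case: ifP => _; last by rewrite mul0r.
have T_gt0 : (0 < #|T|)%N by rewrite card_gt0.
by rewrite -(prednK T_gt0) /= exprS mulrAC divff ?mul1r ?pnatr_eq0.
Qed.

Section SyndromeSystem.
Variables (R : realType) (m : nat) (Cls : finType) (J : Cls -> {set 'I_m}).
Variables (X : Cls -> R) (Y : {set 'I_m} -> R).
Hypothesis J_nontriv : forall C, J C != set0.
Hypothesis hsys : forall S : {set 'I_m}, (exists C, S \subset J C) ->
  Y S = \sum_C Dentry R S (J C) * X C.

Lemma alternating_sum_syndromes (C : Cls) :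
  \sum_(S : {set 'I_m} | S \subset J C) - (-1) ^+ #|S| * Y S
    = 2%:R ^+ #|J C|.-1 * \sum_(C' | J C \subset J C') X C'.
Proof.
transitivity (\sum_(S : {set 'I_m} | S \subset J C) \sum_C' - (-1) ^+ #|S| * Dentry R S (J C') * X C').
  apply: eq_bigr => S sSJ; rewrite (hsys (ex_intro _ C sSJ)) mulr_sumr.
  by apply: eq_bigr => C' _; rewrite mulrA.
rewrite exchange_big mulr_sumr [RHS]big_mkcond /=; apply: eq_bigr => C' _.
rewrite -mulr_suml sum_subset_sign_Dentry //.
by case: ifP; rewrite ?mul0r.
Qed.

End SyndromeSystem.

Theorem lemma16 (R : realType) (m : nat) (Cls : finType)
    (J : Cls -> {set 'I_m})
    (J_inj : injective J)
    (J_nontriv : forall C : Cls, J C != set0)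
    (X : Cls -> R) (Y : {set 'I_m} -> R)
    (hsys : forall S : {set 'I_m}, (exists C : Cls, S \subset J C) ->
              Y S = \sum_(C : Cls) Dentry R S (J C) * X C) :
  forall C : Cls,
    X C = - (\sum_(C' : Cls | J C \proper J C') X C')
          + (2%:R ^+ (#|J C|.-1))^-1
            * \sum_(S : {set 'I_m} | S \subset J C) (- (-1) ^+ #|S|) * Y S.
Proof.
move=> C.
have split_self : \sum_(C' | J C \subset J C') X C' = X C + \sum_(C' | J C \proper J C') X C'.
  rewrite (bigD1 C) ?subxx //=; congr (_ + _); apply: eq_bigl => C'.
  by rewrite properEneq andbC (inj_eq J_inj) eq_sym.
rewrite (alternating_sum_syndromes J_nontriv hsys) split_self mulKf ?expf_neq0 ?pnatr_eq0 //.
by rewrite addrCA addNr addr0.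
Qed.
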